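(* Assume the setting and Algorithm 1 described in the context, with $|Q|\ge2$. Take parameters $P=\Theta(\frac{M^2}{\varepsilon_1^2}\log|Q|)$, $R=\Theta(\frac{M}{\varepsilon_1})$ and $T=\Theta(\frac{R}{\varepsilon_2}\log|Q|)$, with suitable absolute constants. Then with probability at least $7/8$ the distribution $\hat q$ returned by Algorithm 1 satisfies $\mathrm{Inv}(\hat q)\le\varepsilon_2$.
   Context: Setting. $X$ is a countable set and $p$ is a probability distribution on $X$. For a distribution $q$ on $X$, $q_x$ is the mass of $x$, $\mathrm{supp}(q)=\{x:q_x>0\}$, and $q(A)=\sum_{x\in A}q_x$. An invalidity function $\mathrm{Inv}:X\to\{0,1\}$ is given with $\mathrm{Inv}(x)=0$ for all $x\in\mathrm{supp}(p)$. For a distribution $q$, $\mathrm{Inv}(q)=\mathbb{E}_{x\sim q}[\mathrm{Inv}(x)]$. Fix $M>0$ and a monotone non-increasing function $L:[0,1]\to[0,M]$, and set $\mathrm{Loss}(q)=\mathbb{E}_{x\sim p}[L(q_x)]$. The learner may draw i.i.d. samples from $p$ and may query $\mathrm{Inv}(x)$ at any point $x$. $Q$ is a finite family of probability distributions on $X$ containing at least one $q$ with $\mathrm{Inv}(q)=0$. $q^*$ denotes a minimizer of $\mathrm{Loss}(q)$ over $\{q\in Q:\mathrm{Inv}(q)=0\}$. Oracle. For a finite multiset $X_P$ and a finite set $X_N\subseteq X$, $\mathrm{Oracle}(X_P,X_N)$ returns some $q\in Q$ minimizing $\frac1{|X_P|}\sum_{x\in X_P}L(q_x)$ among all $q\in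 Q$ with $\mathrm{supp}(q)\cap X_N=\emptyset$. Algorithm 1 (parameters $P,R,T$): (1) Draw a multiset $X_P$ of $P$ i.i.d. samples from $p$. Set $X_N=\emptyset$. (2) For $i=1,\dots,R$: let $q^i=\mathrm{Oracle}(X_P,X_N)$. Draw $T$ i.i.d. samples from $q^i$ and query the invalidity of each. If none is invalid, output $q^i$ and stop. Otherwise add all invalid ones to $X_N$. (3) If no output has been produced after $R$ rounds, choose $i$ uniformly from $\{1,\dots,R\}$ and let $A^i=\{x:\exists j>i,\ x\in\mathrm{supp}(q^j)\}$. Output the distribution $\hat q$ that draws $x\sim q^i$ and returns $x$ if $x\in A^i$, and otherwise returns a fixed point $x^*$ with $\mathrm{Inv}(x^* )=0$. *)

From Stdlib Require Import Reals ClassicalEpsilon.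
From mathcomp Require Import all_boot.
Set Implicit Arguments. Unset Strict Implicit. Unset Printing Implicit Defensive.
Local Open Scope R_scope.

Section Defs.
Variable X : countType.

(* Enumeration of X along pickle (pickle_inv is a sharp inverse: each x appears once). *)
Definition enumX (f : X -> R) (n : nat) : R :=
  match @pickle_inv X n with Some x => f x | None => 0 end.

(* sum over the countable set X (the series value when it converges; 0 otherwise —
   only ever applied to nonnegative summable families). *)
Definition sumX (f : X -> R) : R :=
  match excluded_middle_informative (exists l, infinite_sum (enumX f) l) with
  | left H => proj1_sig (constructive_indefinite_description _ H)
  | right _ => 0
  end.

Definition is_dist (q : X -> R) : Prop :=
  (forall x, 0 <= q x) /\ infinite_sum (enumX q) 1.

Definition Ex (q : X -> R) (g : X -> R) : R := sumX (fun x => q x * g x).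

Definition InvR (Inv : X -> bool) (x : X) : R := if Inv x then 1 else 0.
Definition InvD (Inv : X -> bool) (q : X -> R) : R := Ex q (InvR Inv).

Fixpoint iidE (q : X -> R) (n : nat) (F : seq X -> R) {struct n} : R :=
  match n with
  | O => F [::]
  | S n' => Ex q (fun x => iidE q n' (fun s => F (x :: s)))
  end.

Definition avoids (q : X -> R) (XN : seq X) : Prop :=
  forall x, x \in XN -> q x = 0.

Definition emp_loss (L : R -> R) (q : X -> R) (XP : seq X) : R :=
  / INR (size XP) * foldr (fun x acc => L (q x) + acc) 0 XP.

(* The family Q = {Qf i | i < k}; orc returns an index of Q. Oracle specification:
   returns a minimizer of the empirical loss among members avoiding XN
   (whenever such members exist). *)
Definition oracle_spec (L : R -> R) (k : nat) (Qf : nat -> X -> R)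
  (orc : seq X -> seq X -> nat) : Prop :=
  forall XP XN, (exists j, (j < k)%nat /\ avoids (Qf j) XN) ->
    [/\ (orc XP XN < k)%nat, avoids (Qf (orc XP XN)) XN &
        forall j, (j < k)%nat -> avoids (Qf j) XN ->
          emp_loss L (Qf (orc XP XN)) XP <= emp_loss L (Qf j) XP].

Definition posb (r : R) : bool := if Rlt_dec 0 r then true else false.

(* A^i = {x : exists j > i, x in supp(q^j)}, hist = [q^1; ...; q^R], i is 1-based *)
Definition inA (hist : seq (X -> R)) (i : nat) (x : X) : bool :=
  has (fun q => posb (q x)) (drop i hist).

Definition qhat (hist : seq (X -> R)) (i : nat) (xs : X) : X -> R :=
  let qi := nth (fun _ => 0) hist i.-1 in
  let kept := fun y => if inA hist i y then qi y else 0 in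
  fun x => kept x + (if x == xs then 1 - sumX kept else 0).

Definition ind (b : bool) : R := if b then 1 else 0.
Definition leb (a b : R) : bool := if Rle_dec a b then true else false.

(* Probability (over the uniform choice of i in {1..R}) that Inv(\hat q) <= eps2 *)
Definition final_prob (Inv : X -> bool) (xs : X) (eps2 : R) (nR : nat)
  (hist : seq (X -> R)) : R :=
  / INR nR * foldr (fun i acc => ind (leb (InvD Inv (qhat hist i xs)) eps2) + acc) 0
                   (iota 1 nR).

(* Probability of success of the remaining r rounds of step (2), given XP, current XN
   and the history of chosen distributions. *)
Fixpoint rounds_prob (Inv : X -> bool) (Qf : nat -> X -> R)
  (orc : seq X -> seq X -> nat) (xs : X) (eps2 : R) (nR T : nat) (XP : seq X)
  (r : nat) (XN : seq X) (hist : seq (X -> R)) {struct r} : R :=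
  match r with
  | O => final_prob Inv xs eps2 nR hist
  | S r' =>
      let qi := Qf (orc XP XN) in
      iidE qi T (fun s =>
        if all (fun x => ~~ Inv x) s then ind (leb (InvD Inv qi) eps2)
        else rounds_prob Inv Qf orc xs eps2 nR T XP r'
               (XN ++ filter Inv s) (rcons hist qi))
  end.

Definition success_prob (p : X -> R) (Inv : X -> bool) (Qf : nat -> X -> R)
  (orc : seq X -> seq X -> nat) (xs : X) (eps2 : R) (nP nR T : nat) : R :=
  iidE p nP (fun XP => rounds_prob Inv Qf orc xs eps2 nR T XP nR [::] [::]).

End Defs.

(* natural-number "ceiling" used to instantiate the Θ(.) parameters *)
Definition nceil (x : R) : nat := Z.to_nat (up x).

(* A potential argument on the number of members of Q still avoiding the invalid
   points found so far ("alive").  Say that a chosen q covers q' when the q-mass of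
   the invalid points of supp q' is at most eps2/R.  A round goes wrong only if it
   accepts some q with Inv(q) > eps2, or if its T samples miss the invalid part of an
   alive member that q does not cover; each of these k+1 events has probability at
   most (1 - eps2/R)^T.  Otherwise the round either stops on a q with Inv(q) <= eps2,
   or it continues having killed the member it chose, and the chosen distributions keep
   covering everything chosen after them.  A member dies in every continuing round, so
   the failure probability is at most k(k+1)(1 - eps2/R)^T <= 1/8 once
   T >= 6 (R/eps2) ln k.  If all R rounds run, then for every index i, Inv(\hat q) is
   at most the sum over j > i of the q^i-mass of the invalid points of supp q^j,
   hence at most eps2. *)

From Stdlib Require Import Reals ZArith Lra Lia Classical ClassicalEpsilon FunctionalExtensionality List.
From mathcomp Require Import all_boot zify.
Set Implicit Arguments. Unset Strict Implicit. Unset Printing Implicit Defensive.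
Local Open Scope R_scope.

Lemma sum_f_R0_lin (u v : nat -> R) a b N :
  sum_f_R0 (fun n => a * u n + b * v n) N = a * sum_f_R0 u N + b * sum_f_R0 v N.
Proof. by elim: N => [|N IH] /=; [ring | rewrite IH; ring]. Qed.

Lemma infinite_sum_lin (u v : nat -> R) a b lu lv :
  infinite_sum u lu -> infinite_sum v lv ->
  infinite_sum (fun n => a * u n + b * v n) (a * lu + b * lv).
Proof.
move=> Hu Hv.
have Hcst c : Un_cv (fun _ : nat => c) c.
  by move=> e He; exists 0%nat => n _; rewrite /R_dist Rminus_diag Rabs_R0.
move=> e He.
have [N HN] := CV_plus _ _ _ _ (CV_mult _ _ _ _ (Hcst a) Hu) (CV_mult _ _ _ _ (Hcst b) Hv) e He.
by exists N => n Hn; rewrite sum_f_R0_lin; exact: HN.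
Qed.

Lemma infinite_sum_term_le (u : nat -> R) n l :
  (forall m, 0 <= u m) -> infinite_sum u l -> u n <= l.
Proof.
move=> Hu Hl; apply: (Rle_trans _ (sum_f_R0 u n)); last exact: sum_incr.
case: n => [|n] /=; first lra.
have := cond_pos_sum u n Hu; lra.
Qed.

Definition sumR (I : Type) (l : seq I) (f : I -> R) : R :=
  foldr (fun i acc => f i + acc) 0 l.

Lemma sumR_le (I : Type) (l : seq I) (f g : I -> R) :
  (forall i, List.In i l -> f i <= g i) -> sumR l f <= sumR l g.
Proof.
elim: l => [|i l IH] H /=; first lra.
have := H i (or_introl erefl); have := IH (fun j Hj => H j (or_intror Hj)); lra.
Qed.

Lemma sumR_cst (I : Type) (l : seq I) c : sumR l (fun _ => c) = INR (size l) * c.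
Proof.
elim: l => [|i l IH]; first by rewrite /=; ring.
by rewrite [size _]/= S_INR /= IH; ring.
Qed.

Lemma sumR_bounds (I : Type) (l : seq I) (f : I -> R) B :
  (forall i, List.In i l -> 0 <= f i <= B) -> 0 <= sumR l f <= INR (size l) * B.
Proof.
move=> H; split; first rewrite -(Rmult_0_r (INR (size l))).
all: by rewrite -sumR_cst; apply: sumR_le => i /H; lra.
Qed.

Lemma sumR_ge0 (I : Type) (l : seq I) (f : I -> R) :
  (forall i, 0 <= f i) -> 0 <= sumR l f.
Proof. by move=> H; elim: l => [|i l IH] /=; [lra | have := H i; lra]. Qed.

Lemma sumR_term_le (I : eqType) (l : seq I) (f : I -> R) j :
  (forall i, 0 <= f i) -> j \in l -> f j <= sumR l f.
Proof.
move=> H0; elim: l => [|i l IH] //=; rewrite in_cons => /orP [/eqP ->|Hj].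
  have := sumR_ge0 l H0; lra.
have := IH Hj; have := H0 i; lra.
Qed.

Definition bounded (T : Type) (f : T -> R) := exists B, forall x, Rabs (f x) <= B.

Lemma bounded_of (T : Type) (f : T -> R) a b : (forall x, a <= f x <= b) -> bounded f.
Proof. by move=> H; exists (Rabs a + Rabs b) => x; have [] := H x; split_Rabs; lra. Qed.

Lemma bounded_lin (T : Type) (f g : T -> R) a b :
  bounded f -> bounded g -> bounded (fun x => a * f x + b * g x).
Proof.
move=> [Bf Hf] [Bg Hg]; exists (Rabs a * Bf + Rabs b * Bg) => x.
apply: (Rle_trans _ _ _ (Rabs_triang _ _)); rewrite !Rabs_mult.
by apply: Rplus_le_compat; apply: Rmult_le_compat_l; auto using Rabs_pos.
Qed.

Section Expectation.
Variable X : countType.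

Lemma enumX_lin (f g : X -> R) a b :
  enumX (fun x => a * f x + b * g x) = (fun n => a * enumX f n + b * enumX g n).
Proof. by apply: functional_extensionality => n; rewrite /enumX; case: pickle_inv => //; ring. Qed.

Lemma enumX_ge0 (f : X -> R) n : (forall x, 0 <= f x) -> 0 <= enumX f n.
Proof. by rewrite /enumX; case: pickle_inv => //; lra. Qed.

Lemma sumX_eq (f : X -> R) l : infinite_sum (enumX f) l -> sumX f = l.
Proof.
move=> Hl; rewrite /sumX; case: excluded_middle_informative => [H|[]]; last by exists l.
by case: constructive_indefinite_description => l' /= Hl'; exact: uniqueness_sum Hl' Hl.
Qed.

Variable q : X -> R.
Hypothesis q_dist : is_dist q.

(* Summability: [q * (f + B)] is dominated by [2 B q], whose series converges. *)
Lemma Ex_infinite_sum (f : X -> R) :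
  bounded f -> infinite_sum (enumX (fun x => q x * f x)) (Ex q f).
Proof.
case: q_dist => q_ge0 q_sum1 [B HB].
have HfB x : - B <= f x <= B by have := HB x; split_Rabs; lra.
have [l Hl] : {l | infinite_sum (enumX (fun x => 1 * (q x * f x) + B * q x)) l}.
  apply: (Rseries_CV_comp _ (enumX (fun x => (2 * B) * q x + 0 * q x))).
    move=> n; rewrite /enumX; case: pickle_inv => [x|]; last lra.
    by have := HfB x; have := q_ge0 x; nra.
  by exists ((2 * B) * 1 + 0 * 1); rewrite enumX_lin; exact: infinite_sum_lin.
have Hf : infinite_sum (enumX (fun x => q x * f x)) (1 * l + (- B) * 1).
  have -> : enumX (fun x => q x * f x) =
            enumX (fun x => 1 * (1 * (q x * f x) + B * q x) + (- B) * q x).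
    by congr enumX; apply: functional_extensionality => x; ring.
  by rewrite enumX_lin; exact: infinite_sum_lin.
by rewrite /Ex (sumX_eq Hf).
Qed.

Lemma Ex_ext (f g : X -> R) : (forall x, f x = g x) -> Ex q f = Ex q g.
Proof. by move=> H; rewrite (functional_extensionality _ _ H). Qed.

Lemma Ex_lin (f g : X -> R) a b : bounded f -> bounded g ->
  Ex q (fun x => a * f x + b * g x) = a * Ex q f + b * Ex q g.
Proof.
move=> Hf Hg; apply: sumX_eq.
have -> : enumX (fun x => q x * (a * f x + b * g x)) =
          enumX (fun x => a * (q x * f x) + b * (q x * g x)).
  by congr enumX; apply: functional_extensionality => x; ring.
by rewrite enumX_lin; apply: infinite_sum_lin; exact: Ex_infinite_sum.
Qed.

Lemma Ex_cst c : Ex q (fun _ => c) = c.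
Proof.
case: q_dist => _ q_sum1; apply: sumX_eq.
have -> : enumX (fun x => q x * c) = enumX (fun x => c * q x + 0 * q x).
  by congr enumX; apply: functional_extensionality => x; ring.
have := infinite_sum_lin c 0 q_sum1 q_sum1.
by rewrite enumX_lin (_ : c * 1 + 0 * 1 = c) //; ring.
Qed.

Lemma Ex_scale (f : X -> R) c : bounded f -> Ex q (fun x => c * f x) = c * Ex q f.
Proof.
move=> Hf; have := Ex_lin c 0 Hf (bounded_of (a := 0) (b := 0) (fun _ => conj (Rle_refl 0) (Rle_refl 0))).
rewrite (_ : c * Ex q f + 0 * Ex q (fun _ => 0) = c * Ex q f); last ring.
by move=> <-; apply: Ex_ext => x; ring.
Qed.

Lemma Ex_ge0 (f : X -> R) : bounded f -> (forall x, 0 < q x -> 0 <= f x) -> 0 <= Ex q f.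
Proof.
move=> Hf Hpos.
have Hterm n : 0 <= enumX (fun x => q x * f x) n.
  apply: enumX_ge0 => x; case: (proj1 q_dist x) => [Hx|<-]; last lra.
  by have := Hpos x Hx; nra.
by have := infinite_sum_term_le 0 Hterm (Ex_infinite_sum Hf); have := Hterm 0%nat; lra.
Qed.

Lemma Ex_le (f g : X -> R) : bounded f -> bounded g ->
  (forall x, 0 < q x -> f x <= g x) -> Ex q f <= Ex q g.
Proof.
move=> Hf Hg H.
have : 0 <= Ex q (fun x => 1 * g x + (-1) * f x).
  by apply: Ex_ge0 => [|x /H]; [exact: bounded_lin | lra].
by rewrite Ex_lin //; lra.
Qed.

Lemma Ex_bounds (f : X -> R) a b : (forall x, a <= f x <= b) -> a <= Ex q f <= b.
Proof.
move=> H; have Hf := bounded_of H.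
by split; [rewrite -{1}(Ex_cst a) | rewrite -(Ex_cst b)];
  apply: Ex_le => // [|x _]; (try exact: bounded_of (fun _ => conj (Rle_refl _) (Rle_refl _))); case: (H x).
Qed.

Lemma Ex_sumR (I : Type) (l : seq I) (F : I -> X -> R) :
  (forall i x, 0 <= F i x <= 1) ->
  Ex q (fun x => sumR l (fun i => F i x)) = sumR l (fun i => Ex q (F i)).
Proof.
move=> HF; elim: l => [|i l IH] /=; first exact: Ex_cst.
have Hl : bounded (fun x => sumR l (fun i => F i x)).
  by apply: (bounded_of (a := 0) (b := INR (size l) * 1)) => x; apply: sumR_bounds => j _.
rewrite -IH -[Ex q (F i)]Rmult_1_l -[Ex q (fun x => sumR _ _)]Rmult_1_l -Ex_lin //.
  by apply: Ex_ext => x; ring.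
exact: bounded_of (HF i).
Qed.

End Expectation.

Section IidExpectation.
Variable X : countType.
Variable q : X -> R.
Hypothesis q_dist : is_dist q.

Lemma iidE_bounds n (F : seq X -> R) a b : (forall s, a <= F s <= b) -> a <= iidE q n F <= b.
Proof.
elim: n F => [|n IH] F H /=; first exact: H.
by apply: Ex_bounds => // x; apply: IH.
Qed.

Lemma iidE_cst n c : iidE q n (fun _ => c) = c.
Proof.
elim: n => [|n IH] //=.
by rewrite (@Ex_ext _ q _ (fun _ => c)) ?Ex_cst.
Qed.

Lemma bounded_iidE_cons n (F : seq X -> R) :
  bounded F -> bounded (fun x => iidE q n (fun s => F (x :: s))).
Proof.
move=> [B HB]; exists B => x; apply: Rabs_le; apply: iidE_bounds => s.
by have := HB (x :: s); split_Rabs; lra.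
Qed.

Lemma bounded_cons (F : seq X -> R) x : bounded F -> bounded (fun s => F (x :: s)).
Proof. by case=> B HB; exists B. Qed.

Lemma iidE_lin n (F G : seq X -> R) a b : bounded F -> bounded G ->
  iidE q n (fun s => a * F s + b * G s) = a * iidE q n F + b * iidE q n G.
Proof.
elim: n F G => [|n IH] F G HF HG //=.
rewrite -Ex_lin //; try exact: bounded_iidE_cons.
by apply: Ex_ext => x; apply: IH; exact: bounded_cons.
Qed.

Lemma iidE_scale n (F : seq X -> R) c : bounded F -> iidE q n (fun s => c * F s) = c * iidE q n F.
Proof.
move=> HF; have := iidE_lin n c 0 HF (bounded_of (a := 0) (b := 0) (fun _ => conj (Rle_refl 0) (Rle_refl 0))).
rewrite (_ : c * iidE q n F + 0 * iidE q n (fun _ => 0) = c * iidE q n F); last ring.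
by move=> <-; congr iidE; apply: functional_extensionality => s; ring.
Qed.

Lemma iidE_le n (F G : seq X -> R) : bounded F -> bounded G ->
  (forall s, all (fun x => posb (q x)) s -> F s <= G s) -> iidE q n F <= iidE q n G.
Proof.
elim: n F G => [|n IH] F G HF HG H /=; first exact: H.
apply: Ex_le => //; try exact: bounded_iidE_cons.
move=> x Hx; apply: IH; try exact: bounded_cons.
by move=> s Hs; apply: H; rewrite /= Hs andbT /posb; case: Rlt_dec.
Qed.

Lemma iidE_sumR n (I : Type) (l : seq I) (F : I -> seq X -> R) :
  (forall i s, 0 <= F i s <= 1) ->
  iidE q n (fun s => sumR l (fun i => F i s)) = sumR l (fun i => iidE q n (F i)).
Proof.
move=> HF; elim: l => [|i l IH] /=; first exact: iidE_cst.
have Hl : bounded (fun s => sumR l (fun i => F i s)).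
  by apply: (bounded_of (a := 0) (b := INR (size l) * 1)) => s; apply: sumR_bounds => j _.
rewrite -IH -[iidE q n (F i)]Rmult_1_l -[iidE q n (fun s => sumR _ _)]Rmult_1_l -iidE_lin //.
  by congr iidE; apply: functional_extensionality => s; ring.
exact: bounded_of (HF i).
Qed.

Lemma ind_and a b : ind (a && b) = ind a * ind b.
Proof. by case: a; case: b => /=; ring. Qed.

Lemma ind_bounds b : 0 <= ind b <= 1.
Proof. by case: b => /=; lra. Qed.

Lemma iidE_all n (P : pred X) :
  iidE q n (fun s => ind (all P s)) = Ex q (fun x => ind (P x)) ^ n.
Proof.
elim: n => [|n IH] //=.
rewrite -IH Rmult_comm -Ex_scale //; last exact: bounded_of (fun x => ind_bounds (P x)).
apply: Ex_ext => x; rewrite Rmult_comm -iidE_scale; last exact: bounded_of (fun s => ind_bounds (all P s)).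
by congr iidE; apply: functional_extensionality => s; rewrite /= ind_and Rmult_comm.
Qed.

End IidExpectation.

Lemma ind_has_le (I : Type) (P : pred I) (l : seq I) : ind (has P l) <= sumR l (fun i => ind (P i)).
Proof.
elim: l => [|i l IH] /=; first lra.
have := sumR_ge0 l (fun j => proj1 (ind_bounds (P j))).
by case: (P i) => /=; lra.
Qed.

Lemma sumR_ind_true (I : Type) (l : seq I) (b : I -> bool) :
  (forall i, List.In i l -> b i) -> sumR l (fun i => ind (b i)) = INR (size l).
Proof.
move=> H; rewrite -[INR _]Rmult_1_r -sumR_cst.
elim: l H => [|i l IH] H //=; rewrite H /=; last by left.
by rewrite IH // => j Hj; apply: H; right.
Qed.

Lemma In_mem (T : eqType) (x : T) (s : seq T) : List.In x s -> x \in s.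
Proof. by elim: s => [|y s IH] //= [->|/IH]; rewrite in_cons ?eqxx // => ->; rewrite orbT. Qed.

Lemma count_lt (T : eqType) (a b : pred T) (l : seq T) y :
  (forall z, a z -> b z) -> y \in l -> b y -> ~~ a y -> (count a l < count b l)%N.
Proof.
move=> Hab; elim: l => [|z l IH] //=; rewrite in_cons => /orP [/eqP <-|Hy] Hb Ha.
  by rewrite Hb (negbTE Ha) /=; have := sub_count Hab l; lia.
have := IH Hy Hb Ha; case Haz: (a z); first by rewrite (Hab z Haz) /=; lia.
by case: (b z) => /=; lia.
Qed.

Lemma posbP r : reflect (0 < r) (posb r).
Proof. by rewrite /posb; case: Rlt_dec => H; constructor. Qed.

Lemma lebP a b : reflect (a <= b) (leb a b).
Proof. by rewrite /leb; case: Rle_dec => H; constructor. Qed.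

Lemma InvD_eq0_invalid (X : countType) (Inv : X -> bool) (q : X -> R) x :
  is_dist q -> InvD Inv q = 0 -> Inv x -> q x = 0.
Proof.
move=> Hq H0 Hx.
have Hsum := Ex_infinite_sum Hq (bounded_of (fun y => ind_bounds (Inv y))).
rewrite -/(InvD Inv q) H0 in Hsum.
have Hterm n : 0 <= enumX (fun y => q y * InvR Inv y) n.
  by apply: enumX_ge0 => y; have := proj1 Hq y; rewrite /InvR; case: (Inv y); lra.
have := infinite_sum_term_le (pickle x) Hterm Hsum.
by rewrite /enumX pickleK_inv /InvR Hx; have := proj1 Hq x; lra.
Qed.

Section Rounds.
Variable X : countType.
Variable Inv : X -> bool.
Variable L : R -> R.
Variables (k : nat) (Qf : nat -> X -> R) (orc : seq X -> seq X -> nat).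
Variable xs : X.
Variable eps2 : R.
Variables nR T : nat.
Variable XP : seq X.
Hypothesis Qf_dist : forall i, (i < k)%N -> is_dist (Qf i).
Hypothesis valid_in_Q : exists i, (i < k)%N /\ InvD Inv (Qf i) = 0.
Hypothesis orc_spec : oracle_spec L k Qf orc.
Hypothesis xs_valid : Inv xs = false.
Hypothesis eps2_gt0 : 0 < eps2.
Hypothesis nR_gt0 : (0 < nR)%N.

Definition alive (XN : seq X) (j : nat) : bool :=
  all (fun x => if Req_EM_T (Qf j x) 0 then true else false) XN.

Definition nalive (XN : seq X) : nat := count (alive XN) (iota 0 k).

Definition inv_mass (q q' : X -> R) : R := Ex q (fun x => ind (Inv x && posb (q' x))).

Definition covers (q q' : X -> R) : Prop := inv_mass q q' <= eps2 / INR nR.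

Definition miss_prob : R := Rmax 0 (1 - eps2 / INR nR) ^ T.

Definition fail_prob : R := miss_prob * (INR k + 1).

Notation RP := (rounds_prob Inv Qf orc xs eps2 nR T XP).

Lemma aliveP XN j : reflect (avoids (Qf j) XN) (alive XN j).
Proof.
apply: (iffP allP) => H x /H; first by case: Req_EM_T.
by case: Req_EM_T.
Qed.

Lemma alive_cat XN XN' j : alive (XN ++ XN') j -> alive XN j.
Proof. by rewrite /alive all_cat => /andP []. Qed.

Lemma orc_alive XN : all Inv XN -> (orc XP XN < k)%N /\ alive XN (orc XP XN).
Proof.
move=> HXN.
have Havoid : exists j, (j < k)%N /\ avoids (Qf j) XN.
  case: valid_in_Q => i [Hi H0]; exists i; split => // x Hx.
  exact: InvD_eq0_invalid (Qf_dist Hi) H0 (allP HXN x Hx).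
by case: (orc_spec XP Havoid) => Hk Havoids _; split => //; apply/aliveP.
Qed.

Lemma INR_nR_ge1 : 1 <= INR nR.
Proof. by apply: (le_INR 1); apply/leP. Qed.

Lemma eps2_div_le : eps2 / INR nR <= eps2.
Proof.
have H1 := INR_nR_ge1; rewrite -[X in _ <= X]Rmult_1_r.
by apply: Rmult_le_compat_l; [lra | rewrite -Rinv_1; apply: Rinv_le_contravar; lra].
Qed.

Lemma final_prob_bounds hist : 0 <= final_prob Inv xs eps2 nR hist <= 1.
Proof.
have := @sumR_bounds _ (iota 1 nR) (fun i => ind (leb (InvD Inv (qhat hist i xs)) eps2)) 1
  (fun i _ => ind_bounds _).
rewrite size_iota Rmult_1_r /final_prob -/(sumR _ _) => Hs.
have H1 := INR_nR_ge1.
have Hinv : / INR nR * INR nR = 1 by field; lra.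
have := Rinv_0_lt_compat (INR nR); split; nra.
Qed.

Lemma rounds_prob_bounds r XN hist : all Inv XN -> 0 <= RP r XN hist <= 1.
Proof.
elim: r XN hist => [|r IH] XN hist HXN /=; first exact: final_prob_bounds.
apply: (iidE_bounds (Qf_dist (proj1 (orc_alive HXN)))) => s.
case: all; first exact: ind_bounds.
by apply: IH; rewrite all_cat HXN filter_all.
Qed.

Definition dist0 : X -> R := fun _ => 0.

Definition hist_ok (XN : seq X) (hist : seq (X -> R)) : Prop :=
  [/\ forall a, (a < size hist)%N -> is_dist (nth dist0 hist a),
      forall a, (a < size hist)%N -> forall q', List.In q' (drop a.+1 hist) ->
        covers (nth dist0 hist a) q' &
      forall a, (a < size hist)%N -> forall j, (j < k)%N -> alive XN j ->
        covers (nth dist0 hist a) (Qf j)].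

Lemma hist_ok_nil XN : hist_ok XN [::].
Proof. by split. Qed.

Lemma qhat_InvD_le XN hist i : size hist = nR -> hist_ok XN hist -> (0 < i <= nR)%N ->
  InvD Inv (qhat hist i xs) <= eps2.
Proof.
move=> Hsize [Hdist Hcov _] Hi.
have Ha : (i.-1 < size hist)%N by rewrite Hsize; lia.
set qa := nth dist0 hist i.-1.
have Hqa : is_dist qa := Hdist _ Ha.
have -> : InvD Inv (qhat hist i xs) = Ex qa (fun x => ind (Inv x && inA hist i x)).
  rewrite /InvD /Ex; congr sumX; apply: functional_extensionality => x.
  rewrite /qhat /InvR -/dist0 -/qa.
  case Hx: (Inv x) => /=; last ring.
  have -> : (x == xs) = false by apply/eqP => E; rewrite E xs_valid in Hx.
  by case: inA; rewrite /ind; ring.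
set l := drop i hist.
have Hbnd x : 0 <= sumR l (fun q' => ind (Inv x && posb (q' x))) <= INR (size l) * 1.
  exact: sumR_bounds (fun _ _ => ind_bounds _).
apply: (Rle_trans _ (Ex qa (fun x => sumR l (fun q' => ind (Inv x && posb (q' x)))))).
  apply: Ex_le => //; [exact: bounded_of (fun x => ind_bounds _) | exact: bounded_of Hbnd |].
  move=> x _; have := proj1 (Hbnd x).
  by case: (Inv x) => /= H; [exact: ind_has_le | lra].
rewrite Ex_sumR // => [|q' x]; last exact: ind_bounds.
have Hl : INR (size l) <= INR nR by apply: le_INR; apply/leP; rewrite size_drop Hsize; lia.
have [_ Hs] := @sumR_bounds _ l (inv_mass qa) (eps2 / INR nR) (fun q' Hq' =>
  conj (proj1 (Ex_bounds Hqa (fun x => ind_bounds _)))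
       (Hcov _ Ha q' ltac:(by rewrite prednK //; lia))).
apply: (Rle_trans _ _ _ Hs).
have H1 := INR_nR_ge1.
have : INR nR * (eps2 / INR nR) = eps2 by field; lra.
have : 0 < eps2 / INR nR by apply: Rdiv_lt_0_compat; lra.
nra.
Qed.

Lemma final_prob_eq1 XN hist : size hist = nR -> hist_ok XN hist ->
  final_prob Inv xs eps2 nR hist = 1.
Proof.
move=> Hsize Hok; rewrite /final_prob -/(sumR _ _) sumR_ind_true.
  by rewrite size_iota; apply: Rinv_l; have := INR_nR_ge1; lra.
move=> i /In_mem; rewrite mem_iota => Hi.
by apply/lebP; apply: (qhat_InvD_le Hsize Hok); lia.
Qed.

Lemma hist_ok_rcons XN XN' hist j0 :
  hist_ok XN hist -> (j0 < k)%N -> alive XN j0 -> (forall j, alive XN' j -> alive XN j) ->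
  (forall j, (j < k)%N -> alive XN' j -> covers (Qf j0) (Qf j)) ->
  hist_ok XN' (rcons hist (Qf j0)).
Proof.
move=> [Hdist Hcov Halive] Hj0 Halj0 Hsub Hnew.
have Hlast a : (a < (size hist).+1)%N -> (a < size hist)%N = false -> a == size hist.
  by move=> *; apply/eqP; lia.
split=> a; rewrite size_rcons nth_rcons => Ha; case: ifP => Ha';
  rewrite ?(Hlast a Ha Ha').
- exact: Hdist.
- exact: Qf_dist.
- rewrite (drop_rcons Ha') -cats1 => q' Hq'.
  case: (in_app_or _ _ _ Hq') => [|[<-|[]]]; first exact: Hcov.
  exact: Halive.
- by rewrite drop_oversize // size_rcons; lia.
- by move=> j Hj /Hsub; exact: Halive.
- exact: Hnew.
Qed.

Lemma Ex_ind_negb (q : X -> R) (P : pred X) : is_dist q ->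
  Ex q (fun x => ind (~~ P x)) = 1 - Ex q (fun x => ind (P x)).
Proof.
move=> Hq; rewrite (@Ex_ext _ q _ (fun x => 1 * 1 + (-1) * ind (P x))).
  by rewrite Ex_lin ?Ex_cst //; [ring | exact: bounded_of (fun _ => conj (Rle_refl 1) (Rle_refl 1))
                                         | exact: bounded_of (fun x => ind_bounds (P x))].
by move=> x; case: (P x) => /=; ring.
Qed.

Lemma iidE_miss_le (q : X -> R) (b : bool) (P : pred X) : is_dist q ->
  (b -> eps2 / INR nR < Ex q (fun x => ind (P x))) ->
  iidE q T (fun s => ind (b && all (fun x => ~~ P x) s)) <= miss_prob.
Proof.
move=> Hq; case: b => /= Hb; last by rewrite iidE_cst //; apply: pow_le; exact: Rmax_l.
have [HP0 HP1] := Ex_bounds Hq (fun x => ind_bounds (P x)).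
rewrite iidE_all // Ex_ind_negb //; apply: pow_incr; split; first lra.
by apply: (Rle_trans _ (1 - eps2 / INR nR)); [have := Hb isT; lra | exact: Rmax_r].
Qed.

Definition accepts_invalid (q : X -> R) (s : seq X) : bool :=
  ~~ leb (InvD Inv q) eps2 && all (fun x => ~~ Inv x) s.

Definition misses_uncovered (XN : seq X) (q : X -> R) (j : nat) (s : seq X) : bool :=
  (alive XN j && ~~ leb (inv_mass q (Qf j)) (eps2 / INR nR)) &&
  all (fun x => ~~ (Inv x && posb (Qf j x))) s.

Definition failure (XN : seq X) (q : X -> R) (s : seq X) : R :=
  ind (accepts_invalid q s) + sumR (iota 0 k) (fun j => ind (misses_uncovered XN q j s)).

Lemma failure_bounds XN q s : 0 <= failure XN q s <= 1 + INR k.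
Proof.
have := ind_bounds (accepts_invalid q s).
have := @sumR_bounds _ (iota 0 k) (fun j => ind (misses_uncovered XN q j s)) 1 (fun _ _ => ind_bounds _).
by rewrite size_iota /failure; lra.
Qed.

Lemma iidE_failure_le XN q : is_dist q -> iidE q T (failure XN q) <= fail_prob.
Proof.
move=> Hq.
have Hnb : bounded (fun s => sumR (iota 0 k) (fun j => ind (misses_uncovered XN q j s))).
  apply: (bounded_of (a := 0) (b := INR (size (iota 0 k)) * 1)) => s.
  exact: sumR_bounds (fun _ _ => ind_bounds _).
rewrite (_ : failure XN q = fun s => 1 * ind (accepts_invalid q s) +
           1 * sumR (iota 0 k) (fun j => ind (misses_uncovered XN q j s))); last first.
  by apply: functional_extensionality => s; rewrite /failure; ring.
rewrite iidE_lin //; last exact: bounded_of (fun s => ind_bounds _).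
have Hacc : iidE q T (fun s => ind (accepts_invalid q s)) <= miss_prob.
  apply: iidE_miss_le => // /negP Hle.
  have : eps2 < InvD Inv q by apply: Rnot_le_lt => /lebP.
  by rewrite /InvD /InvR /ind; have := eps2_div_le; lra.
have Hmiss : sumR (iota 0 k) (fun j => iidE q T (fun s => ind (misses_uncovered XN q j s)))
             <= INR k * miss_prob.
  have := @sumR_bounds _ (iota 0 k) (fun j => iidE q T (fun s => ind (misses_uncovered XN q j s)))
    miss_prob.
  rewrite size_iota => H; apply: (proj2 (H _)) => j _; split.
    exact: proj1 (iidE_bounds Hq T (fun s => ind_bounds _)).
  apply: iidE_miss_le => // /andP [_ /negP Hle].
  by apply: Rnot_le_lt => /lebP.
rewrite iidE_sumR // => [|j s]; last exact: ind_bounds.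
by rewrite /fail_prob; lra.
Qed.

Lemma fail_prob_ge0 : 0 <= fail_prob.
Proof.
apply: Rmult_le_pos; last by have := pos_INR k; lra.
by apply: pow_le; exact: Rmax_l.
Qed.

Lemma nalive_cat_lt XN XN' j0 : (j0 < k)%N -> alive XN j0 -> ~~ alive (XN ++ XN') j0 ->
  (nalive (XN ++ XN') < nalive XN)%N.
Proof.
move=> Hj0 Halive Hdead; apply: (count_lt (@alive_cat XN XN')) Halive Hdead.
by rewrite mem_iota; lia.
Qed.

Lemma misses_of_uncovered XN q j s :
  alive (XN ++ filter Inv s) j -> ~ covers q (Qf j) -> misses_uncovered XN q j s.
Proof.
move=> Halive Hcov; rewrite /misses_uncovered (alive_cat Halive) /=.
apply/andP; split; first by apply/negP => /lebP.
apply/allP => y Hy; apply/negP => /andP [HIy /posbP Hpos].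
move/aliveP: Halive => /(_ y); rewrite mem_cat mem_filter HIy Hy orbT => /(_ isT).
lra.
Qed.

Lemma round_value_ge r XN hist s :
  (size hist + r.+1)%N = nR -> all Inv XN -> hist_ok XN hist ->
  (forall XN' hist', (size hist' + r)%N = nR -> all Inv XN' -> hist_ok XN' hist' ->
     1 - fail_prob * INR (nalive XN') <= RP r XN' hist') ->
  let q := Qf (orc XP XN) in
  all (fun x => posb (q x)) s ->
  1 - fail_prob * INR (nalive XN) + fail_prob - failure XN q s <=
  (if all (fun x => ~~ Inv x) s then ind (leb (InvD Inv q) eps2)
   else RP r (XN ++ filter Inv s) (rcons hist q)).
Proof.
move=> Hsize HXN Hok IH q Hsupp.
have [Hj0 Halj0] := orc_alive HXN.
have Hfp := fail_prob_ge0.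
have [Hf0 _] := failure_bounds XN q s.
have Hn1 : 1 <= INR (nalive XN).
  apply: (le_INR 1); apply/leP; rewrite -has_count; apply/hasP.
  by exists (orc XP XN); rewrite ?mem_iota.
have Hsum0 := sumR_ge0 (iota 0 k) (fun j => proj1 (ind_bounds (misses_uncovered XN q j s))).
case Hall: (all _ s).
  case Hle: (leb (InvD Inv q) eps2) => /=; first nra.
  have : ind (accepts_invalid q s) = 1 by rewrite /accepts_invalid Hle Hall.
  by rewrite /failure; nra.
move/negbT: Hall; rewrite -has_predC => /hasP [x Hx /negPn HIx].
set XN' := XN ++ filter Inv s.
have HXN' : all Inv XN' by rewrite all_cat HXN filter_all.
have [HV0 _] := rounds_prob_bounds r (rcons hist q) HXN'.
case: (classic (exists j, (j < k)%N /\ alive XN' j /\ ~ covers q (Qf j))).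
  move=> [j [Hj [Haj Hncov]]].
  have : 1 <= failure XN q s.
    have Hjk : j \in iota 0 k by rewrite mem_iota; lia.
    have := sumR_term_le (fun i => proj1 (ind_bounds (misses_uncovered XN q i s))) Hjk.
    rewrite (misses_of_uncovered Haj Hncov) /failure /=.
    by have := ind_bounds (accepts_invalid q s); lra.
  nra.
move=> Hcov.
have Hdead : ~~ alive XN' (orc XP XN).
  apply/negP => /aliveP /(_ x); rewrite mem_cat mem_filter HIx Hx orbT => /(_ isT).
  by move: (allP Hsupp x Hx) => /posbP; rewrite /q; lra.
have Hok' : hist_ok XN' (rcons hist q).
  apply: hist_ok_rcons Hok Hj0 Halj0 (@alive_cat XN _) _ => j Hj Haj.
  by apply: NNPP => Hn; apply: Hcov; exists j.
have := IH XN' (rcons hist q) ltac:(by rewrite size_rcons; lia) HXN' Hok'.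
have : INR (nalive XN') + 1 <= INR (nalive XN).
  by rewrite -S_INR; apply: le_INR; apply/leP; exact: nalive_cat_lt Hj0 Halj0 Hdead.
nra.
Qed.

Lemma rounds_prob_ge r XN hist :
  (size hist + r)%N = nR -> all Inv XN -> hist_ok XN hist ->
  1 - fail_prob * INR (nalive XN) <= RP r XN hist.
Proof.
elim: r XN hist => [|r IH] XN hist Hsize HXN Hok /=.
  rewrite addn0 in Hsize; rewrite (final_prob_eq1 Hsize Hok).
  by have := fail_prob_ge0; have := pos_INR (nalive XN); nra.
have [Hj0 _] := orc_alive HXN.
have Hq := Qf_dist Hj0.
set q := Qf (orc XP XN).
set a := 1 - fail_prob * INR (nalive XN) + fail_prob.
have Hone : bounded (fun _ : seq X => 1) by exists 1 => _; rewrite Rabs_R1; lra.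
have Hfail : bounded (failure XN q) := bounded_of (failure_bounds XN q).
apply: (Rle_trans _ (iidE q T (fun s => a * 1 + (-1) * failure XN q s))).
  rewrite iidE_lin // iidE_cst //.
  by have := iidE_failure_le XN Hq; rewrite -/q /a; lra.
apply: iidE_le => //; first exact: bounded_lin.
  apply: (bounded_of (a := 0) (b := 1)) => s; case: all; first exact: ind_bounds.
  by apply: rounds_prob_bounds; rewrite all_cat HXN filter_all.
by move=> s Hs; have := round_value_ge Hsize HXN Hok IH Hs; rewrite /= -/q /a; lra.
Qed.

End Rounds.

Lemma nceil_ge x : 0 < x -> x <= INR (nceil x).
Proof.
move=> Hx; rewrite /nceil; have [Hup _] := archimed x.
have Hz : (0 <= up x)%Z by apply: le_0_IZR; lra.
by rewrite INR_IZR_INZ Z2Nat.id //; lra.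
Qed.

Lemma Rmax0_pow_le_exp a n : Rmax 0 (1 - a) ^ n <= exp (- (INR n * a)).
Proof.
have Hmax : Rmax 0 (1 - a) <= exp (- a).
  apply: Rmax_lub; first exact: Rlt_le (exp_pos _).
  by have := exp_ineq1_le (- a); lra.
apply: (Rle_trans _ (exp (- a) ^ n)); first by apply: pow_incr; split; first exact: Rmax_l.
elim: n => [|n IH]; first by rewrite /= Rmult_0_l Ropp_0 exp_0; lra.
rewrite S_INR (_ : - ((INR n + 1) * a) = - a + - (INR n * a)); last ring.
by rewrite exp_plus /=; apply: Rmult_le_compat_l; [exact: Rlt_le (exp_pos _) | exact: IH].
Qed.

Lemma inv_pow6_mul_le K : 2 <= K -> / K ^ 6 * ((K + 1) * K) <= 1 / 8.
Proof.
move=> HK; have HK6 : 0 < K ^ 6 by apply: pow_lt; lra.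
have H4 : 16 <= K ^ 4 by rewrite (_ : 16 = 2 ^ 4); [apply: pow_incr; lra | ring].
have HK2 : 0 <= K ^ 2 by apply: pow_le; lra.
have : 8 * ((K + 1) * K) <= K ^ 6 by rewrite (_ : K ^ 6 = K ^ 4 * K ^ 2); [nra | ring].
have := Rinv_0_lt_compat _ HK6.
have : / K ^ 6 * K ^ 6 = 1 by field; lra.
nra.
Qed.

Lemma fail_prob_mul_le (k nR T : nat) eps2 :
  (2 <= k)%N -> 0 < eps2 -> (0 < nR)%N -> 6 * INR nR / eps2 * ln (INR k) <= INR T ->
  fail_prob k eps2 nR T * INR k <= 1 / 8.
Proof.
move=> Hk He2 HnR HT.
have HnR1 : 1 <= INR nR by apply: (le_INR 1); apply/leP.
have HK : 2 <= INR k by apply: (le_INR 2); apply/leP.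
have Hexp : 6 * ln (INR k) <= INR T * (eps2 / INR nR).
  apply: (Rmult_le_reg_r (INR nR / eps2)); first by apply: Rdiv_lt_0_compat; lra.
  rewrite (_ : INR T * (eps2 / INR nR) * (INR nR / eps2) = INR T); last by field; lra.
  by rewrite (_ : 6 * ln (INR k) * (INR nR / eps2) = 6 * INR nR / eps2 * ln (INR k)) //; field; lra.
have Hmiss : miss_prob eps2 nR T <= / INR k ^ 6.
  apply: (Rle_trans _ _ _ (Rmax0_pow_le_exp _ _)).
  rewrite -(exp_ln (INR k ^ 6)); last by apply: pow_lt; lra.
  rewrite -exp_Ropp ln_pow; last lra.
  rewrite (_ : INR 6 = 6); last by simpl; ring.
  by case: (Rle_lt_or_eq_dec _ _ Hexp) => [/Ropp_lt_contravar/exp_increasing|<-]; lra.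
apply: Rle_trans (inv_pow6_mul_le HK); rewrite /fail_prob Rmult_assoc.
by apply: Rmult_le_compat_r => //; nra.
Qed.

Theorem lemma1 :
  exists cP cR cT : R, 0 < cP /\ 0 < cR /\ 0 < cT /\
  forall (X : countType) (p : X -> R) (Inv : X -> bool) (M : R) (L : R -> R)
         (k : nat) (Qf : nat -> X -> R) (orc : seq X -> seq X -> nat) (xs : X)
         (eps1 eps2 : R),
    is_dist p ->
    (forall x, 0 < p x -> Inv x = false) ->
    0 < M ->
    (forall u, 0 <= u <= 1 -> 0 <= L u <= M) ->
    (forall u v, 0 <= u -> u <= v -> v <= 1 -> L v <= L u) ->
    (2 <= k)%nat ->
    (forall i, (i < k)%nat -> is_dist (Qf i)) ->
    (forall i j, (i < k)%nat -> (j < k)%nat -> Qf i = Qf j -> i = j) ->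
    (exists i, (i < k)%nat /\ InvD Inv (Qf i) = 0) ->
    oracle_spec L k Qf orc ->
    Inv xs = false ->
    0 < eps1 -> 0 < eps2 ->
    let nP := nceil (cP * M ^ 2 / eps1 ^ 2 * ln (INR k)) in
    let nR := nceil (cR * M / eps1) in
    let T := nceil (cT * INR nR / eps2 * ln (INR k)) in
    7 / 8 <= success_prob p Inv Qf orc xs eps2 nP nR T.
Proof.
exists 1, 1, 6; do 3 (split; first lra).
move=> X p Inv M L k Qf orc xs eps1 eps2 Hp _ HM _ _ Hk HQ _ Hvalid Horc Hxs He1 He2 nP nR T.
have HnR : (0 < nR)%N.
  have Hpos : 0 < 1 * M / eps1 by apply: Rdiv_lt_0_compat; lra.
  have := nceil_ge Hpos; rewrite -/nR => H.
  by apply/ltP; apply: INR_lt; simpl; lra.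
have HK : 2 <= INR k by apply: (le_INR 2); apply/leP.
have HT0 : 0 < 6 * INR nR / eps2 * ln (INR k).
  have HnR1 : 1 <= INR nR by apply: (le_INR 1); apply/leP.
  apply: Rmult_lt_0_compat; first by apply: Rdiv_lt_0_compat; lra.
  by rewrite -ln_1; apply: ln_increasing; lra.
have Hfail : fail_prob k eps2 nR T * INR k <= 1 / 8 := fail_prob_mul_le Hk He2 HnR (nceil_ge HT0).
rewrite /success_prob -(iidE_cst Hp nP (7 / 8)).
apply: (iidE_le Hp); first by exists (7 / 8) => _; rewrite Rabs_right; lra.
  apply: (bounded_of (a := 0) (b := 1)) => XP.
  exact: (rounds_prob_bounds xs eps2 T XP HQ Hvalid Horc HnR nR (XN := [::]) [::] erefl).
move=> XP _.
have := @rounds_prob_ge _ _ _ _ _ _ _ _ _ T XP HQ Hvalid Horc Hxs He2 HnR nR [::] [::] erefl erefl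
  (hist_ok_nil _ _ _ _ _ _).
rewrite /nalive count_predT size_iota; lra.
Qed.
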